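(* Let $d\ge1$, let $P\subseteq[-1,1]^d$ be a convex $d$-dimensional polytope containing the origin, let $\alpha\le 1$ be a constant, and let $\mathcal{A}$ be an algorithm such that for every $\vec{w}\in\mathbb{R}^d$, $\mathcal{A}(\vec{w})\in P$ and $\mathcal{A}(\vec{w})\cdot\vec{w}\ge\alpha\cdot\max_{\vec{x}\in P}\vec{x}\cdot\vec{w}$. Let $P_1=\{\vec{\pi} : \vec{\pi}\cdot\vec{w}\le\mathcal{A}(\vec{w})\cdot\vec{w}\ \forall\vec{w}\in[-1,1]^d\}$, and let $WSO$ be the weird separation oracle defined (with arbitrary parameters $N\in\mathbb{N}$, $\delta>0$) as in the context. Whenever $WSO$ rejects a point $\vec{\pi}$, it acts as a valid separation oracle for $P_1$ (and for any polytope contained in $P_1$): $\vec{\pi}\notin P_1$ and the hyperplane it outputs separates $\vec{\pi}$ from $P_1$ (i.e. the output halfspace contains $P_1$ but not $\vec{\pi}$). In other words, the only difference between $WSO$ and a valid separation oracle for $P_1$ is that $WSO$ may accept points outside of $P_1$.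
   Context: ''Running the ellipsoid algorithm with a weird separation oracle'' (an algorithm which on input $\vec{x}$ outputs either ''yes'' or a hyperplane violated by $\vec{x}$, the set of accepted points not necessarily being convex) means: start from a suitable initial ellipsoid; query the oracle on the center of the current ellipsoid; if accepted, output it as a feasible point; otherwise update the ellipsoid using the returned violated hyperplane as in the standard ellipsoid algorithm; repeat for a predetermined number $N$ of iterations, and if no feasible point is found, output ''infeasible''. The oracle $WSO$, on input $\vec{\pi}\in\mathbb{R}^d$, runs the ellipsoid algorithm for $N$ iterations on the following problem in the variables $(\vec{w},t)$: constraints $\vec{w}\in[-1,1]^d$; $t-\vec{\pi}\cdot\vec{w}\le-\delta$; and the weird oracle $\widehat{WSO}(\vec{w},t)$, which answers ''yes'' if $t\ge\mathcal{A}(\vec{w})\cdot\vec{w}$ and otherwise outputs the violated hyperplane $t'\ge\mathcal{A}(\vec{w})\cdot\vec{w}'$ (in the variables $(\vec{w}',t')$). If this inner ellipsoid run outputs ''infeasible'', $WSO(\vec{\pi})=$''yes''; if it finds a feasible point $(t^*,\vec{w}^* )$, $WSO$ rejects $\vec{\pi}$ and outputs the hyperplane $\vec{w}^*\cdot\vec{\pi}'\le t^*$ (in the variable $\vec{\pi}'$). *)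

From HB Require Import structures.
From mathcomp Require Import all_boot all_order all_algebra.
Set Implicit Arguments. Unset Strict Implicit. Unset Printing Implicit Defensive.
Import Order.TTheory GRing.Theory Num.Theory.
Local Open Scope ring_scope.

Section Defs.
Variable R : rcfType.

Definition dotv n (u v : 'rV[R]_n) : R := \sum_(i < n) u 0 i * v 0 i.

Definition in_cube n (w : 'rV[R]_n) : Prop := forall i, -1 <= w 0 i <= 1.

Definition conv_hull n (V : seq 'rV[R]_n) (x : 'rV[R]_n) : Prop :=
  exists lam : 'I_(size V) -> R,
    (forall i, 0 <= lam i) /\ \sum_i lam i = 1 /\
    x = \sum_i lam i *: nth 0 V i.

(* the polytope is full-dimensional: its vertices affinely span R^n,
   i.e. the differences v - v0 have rank n *)
Definition full_dim n (V : seq 'rV[R]_n) : Prop :=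
  exists v0, v0 \in V /\
    \rank (\matrix_(i < size V) (nth 0 V i - v0) : 'M[R]_(size V, n)) = n.

(* A separation-type oracle: None = "yes", Some (a, b) = the violated
   halfspace  a . x <= b. *)
Definition oracle n := 'rV[R]_n -> option ('rV[R]_n * R).

(* Standard central-cut ellipsoid update.  The ellipsoid (c, Q) is
   { x | (x - c) Q^-1 (x - c)^T <= 1 }; the cut keeps { x | a.x <= a.c }. *)
Definition ell_update n (c : 'rV[R]_n) (Q : 'M[R]_n) (a : 'rV[R]_n)
    : 'rV[R]_n * 'M[R]_n :=
  let g := Num.sqrt ((a *m Q *m a^T) 0 0) in
  let b := g^-1 *: (a *m Q) in
  (c - (n%:R + 1)^-1 *: b,
   (n%:R ^+ 2 / (n%:R ^+ 2 - 1)) *: (Q - (2 / (n%:R + 1)) *: (b^T *m b))).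

(* Running the ellipsoid algorithm with a (possibly weird) oracle for N
   iterations from the ellipsoid (c, Q): Some x = feasible point found,
   None = "infeasible". *)
Fixpoint ellipsoid n (O : oracle n) (N : nat) (c : 'rV[R]_n) (Q : 'M[R]_n)
    : option 'rV[R]_n :=
  match N with
  | 0 => None
  | N'.+1 =>
      match O c with
      | None => Some c
      | Some (a, _) => let E := ell_update c Q a in ellipsoid O N' E.1 E.2
      end
  end.

Definition delta_row n (i : 'I_n) : 'rV[R]_n := \row_j (if j == i then 1 else 0).

(* Inner problem in the variables x = (w, t) in R^(d+1):
   w in [-1,1]^d ; t - pi.w <= -delta ; weird oracle t >= A(w).w.
   Constraints are checked in this order; the first violated one is returned. *)
Definition inner_oracle d (A : 'rV[R]_d -> 'rV[R]_d) (pi : 'rV[R]_d) (delta : R)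
    : oracle (d + 1) :=
  fun x =>
    let w := lsubmx x in
    let t := rsubmx x 0 0 in
    match [pick i | (w 0 i < -1) || (1 < w 0 i)] with
    | Some i =>
        if 1 < w 0 i then Some (row_mx (delta_row i) 0, 1)
        else Some (row_mx (- delta_row i) 0, 1)
    | None =>
        if ~~ (t - dotv pi w <= - delta) then
          Some (row_mx (- pi) (const_mx 1), - delta)
        else if t >= dotv (A w) w then None
        else Some (row_mx (A w) (const_mx (-1)), 0)
    end.

(* The weird separation oracle WSO: None = "yes"; Some (ws, ts) = reject, with output halfspace  ws . pi' <= ts. *)

Definition WSO d (A : 'rV[R]_d -> 'rV[R]_d) (N : nat) (delta : R)
    (c0 : 'rV[R]_(d + 1)) (Q0 : 'M[R]_(d + 1)) (pi : 'rV[R]_d)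
    : option ('rV[R]_d * R) :=
  match ellipsoid (inner_oracle A pi delta) N c0 Q0 with
  | None => None
  | Some x => Some (lsubmx x, rsubmx x 0 0)
  end.

Definition P1 d (A : 'rV[R]_d -> 'rV[R]_d) (pi : 'rV[R]_d) : Prop :=
  forall w, in_cube w -> dotv pi w <= dotv (A w) w.

End Defs.

(* A rejection by WSO comes with a point (w, t) on which the inner ellipsoid
   run stopped, so every inner constraint holds there: w lies in the cube,
   t >= A(w).w and t <= pi.w - delta < pi.w. Hence every pi' in P1 satisfies
   pi'.w <= A(w).w <= t, whereas pi.w > t. *)
From HB Require Import structures.
From mathcomp Require Import all_boot all_order all_algebra.
Import Order.TTheory GRing.Theory Num.Theory.
Set Implicit Arguments. Unset Strict Implicit. Unset Printing Implicit Defensive.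
Local Open Scope ring_scope.

Section WeirdSeparationOracle.
Variable R : rcfType.

Lemma dotvC n (u v : 'rV[R]_n) : dotv u v = dotv v u.
Proof. by apply: eq_bigr => i _; rewrite mulrC. Qed.

Lemma ellipsoid_found_accepted n (O : oracle R n) N c Q x :
  ellipsoid O N c Q = Some x -> O x = None.
Proof.
elim: N c Q => [|N IHN] c Q //=.
case accepted: (O c) => [[a b]|]; first exact: IHN.
by case=> <-.
Qed.

Lemma inner_oracle_accepted d (A : 'rV[R]_d -> 'rV[R]_d) pi delta x :
  inner_oracle A pi delta x = None ->
  [/\ in_cube (lsubmx x), rsubmx x 0 0 - dotv pi (lsubmx x) <= - delta
    & dotv (A (lsubmx x)) (lsubmx x) <= rsubmx x 0 0].
Proof.
rewrite /inner_oracle; case: pickP => [i _|out_cube]; first by case: ifP.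
case: ifP => // /negbFE t_le; case: ifP => // t_ge _.
split=> // i; move/negbT: (out_cube i).
by rewrite negb_or -!leNgt => /andP[-> ->].
Qed.

Lemma WSO_rejected d (A : 'rV[R]_d -> 'rV[R]_d) N delta c0 Q0 pi w t :
  0 < delta -> WSO A N delta c0 Q0 pi = Some (w, t) ->
  [/\ in_cube w, t < dotv pi w & dotv (A w) w <= t].
Proof.
move=> delta_gt0; rewrite /WSO; case found: ellipsoid => [x|] //; case=> <- <-.
have [in_w t_le A_le] := inner_oracle_accepted (ellipsoid_found_accepted found).
split=> //; rewrite -subr_lt0; apply: le_lt_trans t_le _.
by rewrite oppr_lt0.
Qed.

End WeirdSeparationOracle.

(* Only [0 < delta] is used: the polytope and the approximation guarantee of
   A are needed to show that WSO accepts enough points, not for rejections. *)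
Theorem corollary1 (R : rcfType) (d : nat) (V : seq 'rV[R]_d)
  (alpha : R) (A : 'rV[R]_d -> 'rV[R]_d)
  (N : nat) (delta : R) (c0 : 'rV[R]_(d + 1)) (Q0 : 'M[R]_(d + 1)) :
  (1 <= d)%N ->
  (forall x, conv_hull V x -> in_cube x) ->
  full_dim V ->
  conv_hull V 0 ->
  alpha <= 1 ->
  (forall w, conv_hull V (A w)) ->
  (forall w x0, conv_hull V x0 ->
     (forall x, conv_hull V x -> dotv x w <= dotv x0 w) ->
     alpha * dotv x0 w <= dotv (A w) w) ->
  0 < delta ->
  forall (pi wstar : 'rV[R]_d) (tstar : R),
    WSO A N delta c0 Q0 pi = Some (wstar, tstar) ->
    [/\ ~ P1 A pi,
        ~ (dotv wstar pi <= tstar)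
      & forall pi', P1 A pi' -> dotv wstar pi' <= tstar].
Proof.
move=> _ _ _ _ _ _ _ delta_gt0 pi w t /(WSO_rejected delta_gt0)[in_w t_lt A_le].
have P1_le pi' : P1 A pi' -> dotv w pi' <= t.
  by move=> /(_ w in_w); rewrite dotvC => /le_trans; apply.
have pi_gt : t < dotv w pi by rewrite dotvC.
by split=> [/P1_le||//]; rewrite leNgt pi_gt.
Qed.
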